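(* Assume $E\setminus T\ne\emptyset$ and let $\epsilon>0$. Let $f\in\mathbb{R}^E$ be feasible with $\xi_r(f)\le(1+\epsilon)\,\xi_r(f^* )$, and let $v$ be its tree induced voltages. Then \[ \big\|v-L^\dagger\chi\big\|_L\le\sqrt{\epsilon\,\tau}\,\big\|L^\dagger\chi\big\|_L . \]
   Context: Let $G=(V,E,w)$ be a connected undirected graph with resistances $r_e=1/w_e>0$. Each edge has a fixed orientation $(a,b)$; for $f\in\mathbb{R}^E$ write $f(b,a):=-f(a,b)$. The incidence matrix $B\in\mathbb{R}^{E\times V}$ has $B_{(a,b),c}=1$ if $c=a$, $-1$ if $c=b$, $0$ otherwise; $R=\mathrm{diag}(r_e)_{e\in E}$; $L=B^TR^{-1}B$, $L^\dagger$ its Moore–Penrose pseudoinverse, and $\|x\|_L=\sqrt{x^TLx}$. The energy of $f$ is $\xi_r(f)=f^TRf$. Fix $\chi\in\mathbb{R}^V$ with $\sum_a\chi(a)=0$; $f$ is feasible if $B^Tf=\chi$; $f^*$ is the unique feasible $f$ minimizing $\xi_r(f)$. Let $T\subseteq E$ be a spanning tree. For vertices $a,b$, $\pi_{(a,b)}\in\mathbb{R}^E$ is the unit flow from $a$ to $b$ along the unique $a$–$b$ path in $T$. For $e=(a,b)\in E\setminus T$, $c_e=\mathbf{1}_e-\pi_{(a,b)}$ and $R_e=c_e^TRc_e$. The tree condition number is $\tau=\sum_{e\in E\setminus T}R_e/r_e$. Fix a root $s\in V$; the tree induced voltages of $f$ are $v(a)=\sum r_{e'}f(e')$, summing over the edges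 $e'$ of the tree path from $a$ to $s$, each traversed in the direction of the path (with the antisymmetry convention). *)

From HB Require Import structures.
From mathcomp Require Import all_boot all_order all_algebra.
Set Implicit Arguments. Unset Strict Implicit. Unset Printing Implicit Defensive.
Import Order.TTheory GRing.Theory Num.Theory.
Local Open Scope ring_scope.

(* Graph: vertices 'I_n, edges 'I_m, edge e oriented (a e, b e). *)

(* A step of a walk: an edge together with the direction of traversal
   (true = from a e to b e, false = from b e to a e). *)
Definition step (m : nat) := ('I_m * bool)%type.

Section Graph.
Variables (n m : nat) (a b : 'I_m -> 'I_n).

Definition src (s : step m) : 'I_n := if s.2 then a s.1 else b s.1.
Definition dst (s : step m) : 'I_n := if s.2 then b s.1 else a s.1.

Fixpoint walk (x y : 'I_n) (p : seq (step m)) : bool :=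
  match p with
  | [::] => x == y
  | st :: p' => (src st == x) && walk (dst st) y p'
  end.

Definition walk_verts (x : 'I_n) (p : seq (step m)) := x :: map dst p.

Definition tree_path (T : {set 'I_m}) (x y : 'I_n) (p : seq (step m)) : Prop :=
  [/\ walk x y p, uniq (walk_verts x p) & all (fun st => st.1 \in T) p].

Definition spanning_tree (T : {set 'I_m}) : Prop :=
  forall x y : 'I_n, exists! p, tree_path T x y p.

Variable R : rcfType.
Variable r : 'I_m -> R.

Definition sgn (d : bool) : R := if d then 1 else -1.

Definition incidence : 'M[R]_(m, n) :=
  \matrix_(e, c) ((c == a e)%:R - (c == b e)%:R).

Definition Rmat : 'M[R]_m := \matrix_(i, j) ((i == j)%:R * r i).
Definition Rinv : 'M[R]_m := \matrix_(i, j) ((i == j)%:R * (r i)^-1).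

Definition laplacian : 'M[R]_n := incidence^T *m Rinv *m incidence.

Definition is_MP_pinv (A P : 'M[R]_n) : Prop :=
  [/\ A *m P *m A = A, P *m A *m P = P,
      (A *m P)^T = A *m P & (P *m A)^T = P *m A].

Definition Lnorm (x : 'cV[R]_n) : R := Num.sqrt ((x^T *m laplacian *m x) 0 0).

Definition energy (f : 'cV[R]_m) : R := (f^T *m Rmat *m f) 0 0.

Definition feasible (chi : 'cV[R]_n) (f : 'cV[R]_m) : Prop :=
  incidence^T *m f = chi.

Definition pathflow (p : seq (step m)) : 'cV[R]_m :=
  \sum_(st <- p) sgn st.2 *: delta_mx st.1 (0 : 'I_1).

(* tp x y is (the) tree path from x to y *)
Definition cycle_vec (tp : 'I_n -> 'I_n -> seq (step m)) (e : 'I_m) : 'cV[R]_m :=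
  delta_mx e 0 - pathflow (tp (a e) (b e)).

Definition Rcyc (tp : 'I_n -> 'I_n -> seq (step m)) (e : 'I_m) : R :=
  ((cycle_vec tp e)^T *m Rmat *m cycle_vec tp e) 0 0.

Definition tree_cond (T : {set 'I_m}) (tp : 'I_n -> 'I_n -> seq (step m)) : R :=
  \sum_(e | e \notin T) Rcyc tp e / r e.

Definition tree_volt (tp : 'I_n -> 'I_n -> seq (step m)) (s : 'I_n)
    (f : 'cV[R]_m) : 'cV[R]_n :=
  \col_x \sum_(st <- tp x s) r st.1 * (sgn st.2 * f st.1 0).

End Graph.

From HB Require Import structures.
From mathcomp Require Import all_boot all_order all_algebra.
From mathcomp Require Import ring lra.
Import Order.TTheory GRing.Theory Num.Theory.
Local Open Scope ring_scope.
Set Implicit Arguments. Unset Strict Implicit. Unset Printing Implicit Defensive.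

(* Write <g, h>_r = sum_e g_e r_e h_e, so that xi_r(g) = <g, g>_r, and let
   phi = L^+ chi, fs the optimal flow and v the tree-induced voltages of f.
   - Linear algebra: x^T L y = sum_e (Bx)_e (By)_e / r_e, and, since
     chi = B^T fs lies in the range of B^T, the pseudoinverse solves L phi = chi.
   - Energy: fs is <.,.>_r-orthogonal to every circulation, whence
     xi(f) = xi(fs) + xi(f - fs); the electrical flow R^-1 B phi is feasible,
     so xi(fs) <= ||phi||_L^2; and ||phi||_L^2 <= xi(g) for every feasible g.
   - For any potential v: ||v - phi||_L^2 + xi(f) = sum_e k_e^2 / r_e
     + ||phi||_L^2 with k_e = r_e f_e - (v(a e) - v(b e)).
   - Trees: tree voltages drop by r_e f_e across tree edges and so telescope
     along tree paths; hence k vanishes on T and k_e = <f, c_e>_r =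
     <f - fs, c_e>_r, and Cauchy-Schwarz gives k_e^2 <= R_e xi(f - fs).
   Altogether ||v - phi||_L^2 <= sum_(e notin T) k_e^2 / r_e
   <= tau xi(f - fs) <= tau eps xi(fs) <= eps tau ||phi||_L^2. *)

Lemma scaled_sqr_ge0 (R : realDomainType) (c x : R) : 0 <= c -> 0 <= x * c * x.
Proof. by move=> c0; rewrite mulrC mulrA -expr2 mulr_ge0 ?sqr_ge0. Qed.

Lemma quadratic_discriminant (R : realFieldType) (U A W : R) :
  0 <= W -> (forall t, 0 <= U + 2 * t * A + t ^+ 2 * W) -> A ^+ 2 <= U * W.
Proof.
move=> W0 nonneg.
have U0 : 0 <= U by have := nonneg 0; rewrite expr0n /= !(mulr0, mul0r, addr0).
have [W_eq0|Wn0] := eqVneq W 0.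
  have [->|An0] := eqVneq A 0; first by rewrite expr0n mulr_ge0.
  have := nonneg (- (U + 1) / (2 * A)).
  have -> : U + 2 * (- (U + 1) / (2 * A)) * A + (- (U + 1) / (2 * A)) ^+ 2 * W = -1.
    by rewrite W_eq0; field; rewrite An0.
  by rewrite oppr_ge0 ler10.
have W_gt0 : 0 < W by rewrite lt_def Wn0.
have := nonneg (- A / W).
have -> : U + 2 * (- A / W) * A + (- A / W) ^+ 2 * W = U - A ^+ 2 / W by field.
by rewrite subr_ge0 ler_pdivrMr.
Qed.

Lemma sum_indicator (R : nzRingType) k (j : 'I_k) (F : 'I_k -> R) :
  \sum_c (c == j)%:R * F c = F j.
Proof.
rewrite (bigD1 j) //= eqxx mul1r big1 ?addr0 // => c /negbTE ->.
by rewrite mul0r.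
Qed.

Lemma self_dot_eq0 (R : realDomainType) k (z : 'cV[R]_k) :
  (z^T *m z) 0 0 = 0 -> z = 0.
Proof.
rewrite mxE => zz; apply/matrixP => i j; rewrite (ord1 j) mxE.
have sq0 c : true -> 0 <= z^T 0 c * z c 0 by rewrite mxE -expr2 sqr_ge0.
move: (psumr_eq0P sq0 zz (i := i) isT); rewrite mxE -expr2 => /eqP.
by rewrite sqrf_eq0 => /eqP.
Qed.

Section QuadraticForms.
Variables (R : rcfType) (n m : nat) (a b : 'I_m -> 'I_n) (r : 'I_m -> R).

Definition rdot (g h : 'cV[R]_m) : R := \sum_e g e 0 * r e * h e 0.

Lemma diag_form (d : 'I_m -> R) (x y : 'cV[R]_m) :
  (x^T *m (\matrix_(i, j) ((i == j)%:R * d i)) *m y) 0 0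
  = \sum_e x e 0 * d e * y e 0.
Proof.
rewrite mxE; apply: eq_bigr => j _; rewrite mxE.
under eq_bigr => i _ do rewrite !mxE.
transitivity ((\sum_i (i == j)%:R * (x i 0 * d i)) * y j 0).
  by congr (_ * _); apply: eq_bigr => i _; ring.
by rewrite sum_indicator.
Qed.

Lemma energyE (g : 'cV[R]_m) : energy r g = rdot g g.
Proof. exact: diag_form. Qed.

Lemma RcycE tp e :
  Rcyc a b r tp e = rdot (cycle_vec a b R tp e) (cycle_vec a b R tp e).
Proof. exact: diag_form. Qed.

Definition pdiff (x : 'cV[R]_n) (e : 'I_m) : R := x (a e) 0 - x (b e) 0.

Lemma incidence_mul (x : 'cV[R]_n) e : (incidence a b R *m x) e 0 = pdiff x e.
Proof.
rewrite mxE; under eq_bigr => c _ do rewrite mxE mulrBl.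
by rewrite sumrB !sum_indicator.
Qed.

Lemma laplacian_form (x y : 'cV[R]_n) :
  (x^T *m laplacian a b r *m y) 0 0 = \sum_e pdiff x e * (r e)^-1 * pdiff y e.
Proof.
have -> : x^T *m laplacian a b r *m y =
          (incidence a b R *m x)^T *m Rinv r *m (incidence a b R *m y).
  by rewrite /laplacian trmx_mul !mulmxA.
by rewrite diag_form; apply: eq_bigr => e _; rewrite !incidence_mul.
Qed.

Lemma div_pairing (w : 'cV[R]_n) (g : 'cV[R]_m) :
  (w^T *m ((incidence a b R)^T *m g)) 0 0 = \sum_e pdiff w e * g e 0.
Proof.
rewrite mulmxA -trmx_mul mxE; apply: eq_bigr => e _.
by rewrite mxE incidence_mul.
Qed.

Lemma laplacian_sym : (laplacian a b r)^T = laplacian a b r.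
Proof.
have RinvT : (Rinv r)^T = Rinv r.
  by apply/matrixP => i j; rewrite !mxE eq_sym; case: eqP => [->|]; rewrite ?mul0r.
by rewrite /laplacian !trmx_mul trmxK RinvT mulmxA.
Qed.

Lemma Rinv_mul (y : 'cV[R]_m) e : (Rinv r *m y) e 0 = (r e)^-1 * y e 0.
Proof.
rewrite mxE; under eq_bigr => c _ do rewrite mxE eq_sym.
transitivity (\sum_c (c == e)%:R * ((r e)^-1 * y c 0)).
  by apply: eq_bigr => c _; case: eqP => [->|]; rewrite ?mul0r ?mul1r.
by rewrite sum_indicator.
Qed.

Lemma rdot_line (g h : 'cV[R]_m) t :
  rdot (g + t *: h) (g + t *: h) = rdot g g + 2 * t * rdot g h + t ^+ 2 * rdot h h.
Proof.
rewrite /rdot !mulr_sumr -!big_split /=; apply: eq_bigr => e _.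
by rewrite !mxE; ring.
Qed.

End QuadraticForms.

Section PositiveResistances.
Variables (R : rcfType) (n m : nat) (a b : 'I_m -> 'I_n) (r : 'I_m -> R).
Hypothesis r_gt0 : forall e, 0 < r e.

Local Notation B := (incidence a b R).
Local Notation L := (laplacian a b r).
Local Notation pdiff := (pdiff a b).

Lemma rdot_ge0 (g : 'cV[R]_m) : 0 <= rdot r g g.
Proof. by apply: sumr_ge0 => e _; apply/scaled_sqr_ge0/ltW. Qed.

Lemma rdot_cauchy_schwarz (g h : 'cV[R]_m) :
  rdot r g h ^+ 2 <= rdot r g g * rdot r h h.
Proof.
apply: quadratic_discriminant; first exact: rdot_ge0.
by move=> t; rewrite -rdot_line rdot_ge0.
Qed.

Lemma conductance_sum_ge0 (P : pred 'I_m) (u : 'I_m -> R) :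
  0 <= \sum_(e | P e) u e * (r e)^-1 * u e.
Proof. by apply: sumr_ge0 => e _; apply: scaled_sqr_ge0; rewrite invr_ge0 ltW. Qed.

Lemma laplacian_kernel (z : 'cV[R]_n) :
  (z^T *m L *m z) 0 0 = 0 -> forall e, pdiff z e = 0.
Proof.
rewrite laplacian_form => zLz e.
have sq0 c : true -> 0 <= pdiff z c * (r c)^-1 * pdiff z c.
  by move=> _; apply: scaled_sqr_ge0; rewrite invr_ge0 ltW.
move: (psumr_eq0P sq0 zLz (i := e) isT) => /eqP.
rewrite mulrC mulrA mulf_eq0 invr_eq0 (gt_eqF (r_gt0 e)) orbF -expr2 sqrf_eq0.
by move/eqP.
Qed.

(* Indeed z = chi - L L^+ chi
   is killed by L and by the projection L L^+, hence orthogonal to chi and to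
   itself. *)
Lemma pinv_solves (Ldag : 'M[R]_n) (chi : 'cV[R]_n) (fs : 'cV[R]_m) :
  is_MP_pinv L Ldag -> feasible a b chi fs -> L *m (Ldag *m chi) = chi.
Proof.
case=> LPL _ PT _ fs_feas.
set P := L *m Ldag.
have LP : L *m P = L.
  have LPT : (L *m P)^T = L by rewrite trmx_mul PT laplacian_sym /P LPL.
  by rewrite -[L *m P]trmxK LPT laplacian_sym.
have PP : P *m P = P by rewrite /P mulmxA LPL.
set z := chi - P *m chi.
have Lz : L *m z = 0 by rewrite mulmxBr mulmxA LP subrr.
have Pz : P *m z = 0 by rewrite mulmxBr mulmxA PP subrr.
have z_chi : (z^T *m chi) 0 0 = 0.
  have Dz : forall e, pdiff z e = 0.
    by apply: laplacian_kernel; rewrite -mulmxA Lz mulmx0 mxE.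
  by rewrite -fs_feas div_pairing big1 // => e _; rewrite Dz mul0r.
have zP : z^T *m P = 0 by rewrite -[P]PT -trmx_mul Pz trmx0.
have z0 : z = 0.
  by apply: self_dot_eq0; rewrite {2}/z mulmxBr mulmxA zP mul0mx subr0.
by apply/eqP; rewrite mulmxA -/P eq_sym -subr_eq0 -/z z0.
Qed.

Lemma optimal_orthogonal (chi : 'cV[R]_n) (fs h : 'cV[R]_m) :
  feasible a b chi fs ->
  (forall g, feasible a b chi g -> energy r fs <= energy r g) ->
  B^T *m h = 0 -> rdot r fs h = 0.
Proof.
move=> fs_feas fs_opt h_circ.
have : rdot r fs h ^+ 2 <= 0 * rdot r h h.
  apply: quadratic_discriminant => [|t]; first exact: rdot_ge0.
  have feas : feasible a b chi (fs + t *: h).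
    by rewrite /feasible mulmxDr -scalemxAr h_circ scaler0 addr0.
  by have := fs_opt _ feas; rewrite !energyE rdot_line; lra.
by rewrite mul0r le_eqVlt ltNge sqr_ge0 orbF sqrf_eq0 => /eqP.
Qed.

Lemma energy_pythagoras (chi : 'cV[R]_n) (fs f : 'cV[R]_m) :
  feasible a b chi fs ->
  (forall g, feasible a b chi g -> energy r fs <= energy r g) ->
  feasible a b chi f -> energy r f = energy r fs + energy r (f - fs).
Proof.
move=> fs_feas fs_opt f_feas.
have circ : B^T *m (f - fs) = 0 by rewrite mulmxBr f_feas fs_feas subrr.
have line := rdot_line r fs (f - fs) 1.
rewrite scale1r addrC subrK (optimal_orthogonal fs_feas fs_opt circ) in line.
by rewrite !energyE line mulr0 addr0 expr1n mul1r.
Qed.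

(* The electrical flow R^-1 B phi is feasible and has energy ||phi||_L^2,
   so the optimal energy is at most ||phi||_L^2. *)
Lemma optimal_energy_le (chi phi : 'cV[R]_n) (fs : 'cV[R]_m) :
  (forall g, feasible a b chi g -> energy r fs <= energy r g) ->
  L *m phi = chi -> energy r fs <= (phi^T *m L *m phi) 0 0.
Proof.
move=> fs_opt Lphi.
set g := Rinv r *m (B *m phi).
have g_feas : feasible a b chi g by rewrite /feasible /g !mulmxA.
suff <- : energy r g = (phi^T *m L *m phi) 0 0 by exact: fs_opt.
rewrite energyE laplacian_form; apply: eq_bigr => e _.
by rewrite /g Rinv_mul incidence_mul; field; rewrite gt_eqF.
Qed.

Lemma potential_energy_le (phi : 'cV[R]_n) (g : 'cV[R]_m) :
  L *m phi = B^T *m g -> (phi^T *m L *m phi) 0 0 <= energy r g.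
Proof.
move=> Lphi.
set Q := (phi^T *m L *m phi) 0 0.
have cross : \sum_e pdiff phi e * g e 0 = Q by rewrite -div_pairing -Lphi mulmxA.
have : 0 <= \sum_e (r e * g e 0 - pdiff phi e) * (r e)^-1
                                   * (r e * g e 0 - pdiff phi e).
  exact: conductance_sum_ge0.
have -> : \sum_e (r e * g e 0 - pdiff phi e) * (r e)^-1
                                   * (r e * g e 0 - pdiff phi e)
          = energy r g - 2 * \sum_e pdiff phi e * g e 0 + Q.
  rewrite energyE /Q laplacian_form mulr_sumr -sumrB -big_split /=.
  by apply: eq_bigr => e _; field; rewrite gt_eqF.
by rewrite cross; lra.
Qed.

Lemma potential_error_identity (v phi : 'cV[R]_n) (f : 'cV[R]_m) :
  L *m phi = B^T *m f ->
  ((v - phi)^T *m L *m (v - phi)) 0 0 + energy r f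
  = \sum_e (r e * f e 0 - pdiff v e) * (r e)^-1 * (r e * f e 0 - pdiff v e)
    + (phi^T *m L *m phi) 0 0.
Proof.
move=> Lphi.
have cross : \sum_e pdiff v e * (r e)^-1 * pdiff phi e = \sum_e pdiff v e * f e 0.
  by rewrite -laplacian_form -mulmxA Lphi div_pairing.
rewrite !laplacian_form energyE /rdot -!big_split /=.
transitivity (\sum_e ((r e * f e 0 - pdiff v e) * (r e)^-1 * (r e * f e 0 - pdiff v e)
   + pdiff phi e * (r e)^-1 * pdiff phi e
   + 2 * (pdiff v e * f e 0 - pdiff v e * (r e)^-1 * pdiff phi e))).
  by apply: eq_bigr => e _; rewrite /pdiff !mxE; field; rewrite gt_eqF.
by rewrite big_split /= -mulr_sumr sumrB cross subrr mulr0 addr0.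
Qed.

End PositiveResistances.

Section Walks.
Variables (R : rcfType) (n m : nat) (a b : 'I_m -> 'I_n).

Local Notation B := (incidence a b R).

Definition pairing (w : 'I_m -> R) (x : 'cV[R]_m) : R := \sum_e w e * x e 0.

Lemma pairing_delta w j : pairing w (delta_mx j 0) = w j.
Proof.
rewrite /pairing (bigD1 j) //= mxE !eqxx mulr1 big1 ?addr0 // => i /negbTE ij.
by rewrite mxE ij mulr0.
Qed.

Lemma pairing_sub w (x y : 'cV[R]_m) : pairing w (x - y) = pairing w x - pairing w y.
Proof. by rewrite /pairing -sumrB; apply: eq_bigr => i _; rewrite !mxE mulrBr. Qed.

Lemma pairing_pathflow w p :
  pairing w (pathflow R p) = \sum_(st <- p) sgn R st.2 * w st.1.
Proof.
rewrite /pairing /pathflow; under eq_bigr do rewrite summxE mulr_sumr.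
rewrite exchange_big; apply: eq_bigr => st _.
rewrite -(pairing_delta w st.1) /pairing mulr_sumr; apply: eq_bigr => i _.
by rewrite !mxE; ring.
Qed.

Lemma pairing_cycle w tp e :
  pairing w (cycle_vec a b R tp e)
  = w e - \sum_(st <- tp (a e) (b e)) sgn R st.2 * w st.1.
Proof. by rewrite pairing_sub pairing_delta pairing_pathflow. Qed.

Lemma walk_divergence (c x y : 'I_n) p : walk a b x y p ->
  \sum_(st <- p) sgn R st.2 * ((c == a st.1)%:R - (c == b st.1)%:R)
  = (c == x)%:R - (c == y)%:R.
Proof.
elim: p x => [|st p IH] x /=; first by move/eqP => ->; rewrite big_nil subrr.
case/andP => /eqP <- walk_p; rewrite big_cons (IH _ walk_p).
by case: st {walk_p} => e [] /=; rewrite /src /dst /sgn /=; ring.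
Qed.

Lemma cycle_circulation tp e : walk a b (a e) (b e) (tp (a e) (b e)) ->
  B^T *m cycle_vec a b R tp e = 0.
Proof.
move=> walk_e; apply/matrixP => c j; rewrite (ord1 j) !mxE.
transitivity (pairing (fun e' => (c == a e')%:R - (c == b e')%:R)
                      (cycle_vec a b R tp e)).
  by apply: eq_bigr => i _; rewrite !mxE.
by rewrite pairing_cycle (walk_divergence c walk_e) subrr.
Qed.

Lemma walk_suffix (x y z : 'I_n) p : walk a b x y p -> z \in walk_verts a b x p ->
  exists k, walk a b z y (drop k p) /\
            walk_verts a b z (drop k p) = drop k (walk_verts a b x p).
Proof.
rewrite /walk_verts; elim: p x => [|st p IH] x /=.
  by rewrite inE => walk_p /eqP ->; exists 0%N.
case/andP => /eqP src_st walk_p; rewrite inE => /orP [/eqP ->|z_in].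
  by exists 0%N; rewrite /= src_st eqxx walk_p.
by have [k [walk_k verts_k]] := IH _ walk_p z_in; exists k.+1.
Qed.

End Walks.

Section TreeVoltages.
Variables (R : rcfType) (n m : nat) (a b : 'I_m -> 'I_n) (r : 'I_m -> R).
Variables (T : {set 'I_m}) (tp : 'I_n -> 'I_n -> seq (step m)) (s : 'I_n).
Variable f : 'cV[R]_m.
Hypothesis tree_T : spanning_tree a b T.
Hypothesis tp_tree : forall x y, tree_path a b T x y (tp x y).
Hypothesis no_loop : forall e, a e != b e.

Local Notation V x := (tree_volt r tp s f x 0).
Local Notation verts := (walk_verts a b).
Local Notation src := (src a b).
Local Notation dst := (dst a b).

Definition voltage_drop (st : step m) : R := r st.1 * (sgn R st.2 * f st.1 0).

Lemma tree_path_unique x y p q :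
  tree_path a b T x y p -> tree_path a b T x y q -> p = q.
Proof.
move=> tp_p tp_q; have [p0 [_ p0_unique]] := tree_T x y.
by rewrite -(p0_unique _ tp_p) -(p0_unique _ tp_q).
Qed.

Lemma tree_path_cons st y p : st.1 \in T -> tree_path a b T (dst st) y p ->
  src st \notin verts (dst st) p -> tree_path a b T (src st) y (st :: p).
Proof.
by move=> st_T [walk_p uniq_p all_p] src_notin; split; rewrite /= ?eqxx ?src_notin ?st_T.
Qed.

Lemma tree_volt_cons st : st.1 \in T ->
  src st \notin verts (dst st) (tp (dst st) s) -> V (src st) = voltage_drop st + V (dst st).
Proof.
move=> st_T src_notin.
have tp_src := tree_path_cons st_T (tp_tree (dst st) s) src_notin.
by rewrite !mxE (tree_path_unique (tp_tree (src st) s) tp_src) big_cons.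
Qed.

(* Two distinct vertices cannot each lie on the other's tree path to the root:
   the suffix of tp y s starting at x would be tp x s, a proper suffix of a
   duplicate-free list starting at y, yet containing y. *)
Lemma tree_paths_not_nested x y : x != y ->
  x \in verts y (tp y s) -> y \notin verts x (tp x s).
Proof.
move=> xy x_in; have [walk_y uniq_y all_y] := tp_tree y s.
have [k [walk_k verts_k]] := walk_suffix walk_y x_in.
have suffix_k : drop k (tp y s) = tp x s.
  apply: tree_path_unique (tp_tree x s); split => //; first by rewrite verts_k drop_uniq.
  by apply/allP => st /mem_drop/(allP all_y).
rewrite -suffix_k verts_k.
case: k {walk_k suffix_k} verts_k => [|k].
  by rewrite drop0 /walk_verts => -[x_eq_y]; rewrite x_eq_y eqxx in xy.
move: uniq_y; rewrite /walk_verts /= => /andP [y_notin _] _.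
by apply: contra y_notin => /mem_drop.
Qed.

Lemma tree_volt_step st : st.1 \in T -> V (src st) - V (dst st) = voltage_drop st.
Proof.
move=> st_T.
have [src_in|src_notin] := boolP (src st \in verts (dst st) (tp (dst st) s)); last first.
  by rewrite (tree_volt_cons st_T src_notin); ring.
set rev := (st.1, ~~ st.2).
have [src_rev dst_rev] : src rev = dst st /\ dst rev = src st.
  by rewrite /rev /src /dst; case: st.2.
have src_dst : src st != dst st.
  by rewrite /src /dst; case: st.2; [|rewrite eq_sym]; apply: no_loop.
have := tree_paths_not_nested src_dst src_in.
rewrite -src_rev -dst_rev => rev_notin.
have := tree_volt_cons (st := rev) st_T rev_notin; rewrite src_rev dst_rev => ->.
by rewrite /voltage_drop /rev /sgn; case: st.2 => /=; ring.
Qed.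

Lemma tree_volt_telescope x y p : walk a b x y p -> all (fun st => st.1 \in T) p ->
  \sum_(st <- p) voltage_drop st = V x - V y.
Proof.
elim: p x => [|st p IH] x /=; first by move/eqP => ->; rewrite big_nil subrr.
case/andP => /eqP <- walk_p /andP [st_T all_p].
rewrite big_cons (IH _ walk_p all_p) -(tree_volt_step st_T); ring.
Qed.

Definition cycle_defect (e : 'I_m) : R :=
  r e * f e 0 - pdiff a b (tree_volt r tp s f) e.

Lemma cycle_defect_tree e : e \in T -> cycle_defect e = 0.
Proof.
move=> e_T; have := tree_volt_step (st := (e, true)) e_T.
by rewrite /voltage_drop /sgn /= mul1r /cycle_defect /pdiff => ->; rewrite subrr.
Qed.

Lemma cycle_defectE e : cycle_defect e = rdot r f (cycle_vec a b R tp e).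
Proof.
have [walk_e _ all_e] := tp_tree (a e) (b e).
have -> : rdot r f (cycle_vec a b R tp e)
          = pairing (fun i => f i 0 * r i) (cycle_vec a b R tp e) by [].
rewrite pairing_cycle /cycle_defect /pdiff -(tree_volt_telescope walk_e all_e).
by congr (_ - _); [ring | apply: eq_bigr => st _; rewrite /voltage_drop; ring].
Qed.

Hypothesis r_gt0 : forall e, 0 < r e.

Lemma tree_cond_ge0 : 0 <= tree_cond a b r T tp.
Proof. by apply: sumr_ge0 => e _; rewrite RcycE divr_ge0 ?rdot_ge0 ?ltW. Qed.

(* As c_e is a circulation, the optimal flow fs is orthogonal to it, so
   k_e = <f - fs, c_e>_r and Cauchy-Schwarz gives k_e^2 <= R_e xi(f - fs). *)
Lemma cycle_defect_sq_le (chi : 'cV[R]_n) (fs : 'cV[R]_m) e :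
  feasible a b chi fs ->
  (forall g, feasible a b chi g -> energy r fs <= energy r g) ->
  cycle_defect e ^+ 2 <= Rcyc a b r tp e * energy r (f - fs).
Proof.
move=> fs_feas fs_opt.
have [walk_e _ _] := tp_tree (a e) (b e).
have fs_c := optimal_orthogonal r_gt0 fs_feas fs_opt (cycle_circulation R walk_e).
have -> : cycle_defect e = rdot r (f - fs) (cycle_vec a b R tp e).
  rewrite cycle_defectE -[LHS]subr0 -fs_c /rdot -sumrB.
  by apply: eq_bigr => i _; rewrite !mxE; ring.
by rewrite RcycE energyE mulrC rdot_cauchy_schwarz.
Qed.

Lemma cycle_defect_sum_le (chi : 'cV[R]_n) (fs : 'cV[R]_m) :
  feasible a b chi fs ->
  (forall g, feasible a b chi g -> energy r fs <= energy r g) ->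
  \sum_e cycle_defect e * (r e)^-1 * cycle_defect e
    <= tree_cond a b r T tp * energy r (f - fs).
Proof.
move=> fs_feas fs_opt.
rewrite (bigID (fun e => e \in T)) /= big1 ?add0r => [|e e_T]; last first.
  by rewrite cycle_defect_tree ?mul0r.
rewrite /tree_cond mulr_suml; apply: ler_sum => e _.
rewrite [leLHS]mulrAC -expr2 [leRHS]mulrAC; apply: ler_wpM2r; first by rewrite invr_ge0 ltW.
exact: cycle_defect_sq_le fs_feas fs_opt.
Qed.

End TreeVoltages.

Unset Implicit Arguments.
Theorem lemma6p2 (R : rcfType) (n m : nat) (a b : 'I_m -> 'I_n)
    (r : 'I_m -> R) (T : {set 'I_m}) (tp : 'I_n -> 'I_n -> seq (step m))
    (s : 'I_n) (chi : 'cV[R]_n) (Ldag : 'M[R]_n) (fstar f : 'cV[R]_m) (eps : R) :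
  (forall e, a e != b e) ->
  (forall e, 0 < r e) ->
  spanning_tree a b T ->
  (forall x y, tree_path a b T x y (tp x y)) ->
  \sum_(c < n) chi c 0 = 0 ->
  is_MP_pinv (laplacian a b r) Ldag ->
  feasible a b chi fstar ->
  (forall g, feasible a b chi g -> energy r fstar <= energy r g) ->
  [exists e, e \notin T] ->
  0 < eps ->
  feasible a b chi f ->
  energy r f <= (1 + eps) * energy r fstar ->
  Lnorm a b r (tree_volt r tp s f - Ldag *m chi)
    <= Num.sqrt (eps * tree_cond a b r T tp) * Lnorm a b r (Ldag *m chi).
Proof.
move=> no_loop r_gt0 tree_T tp_tree _ pinv fs_feas fs_opt _ eps_gt0 f_feas f_near.
set phi := Ldag *m chi; set v := tree_volt r tp s f.
have L_phi : laplacian a b r *m phi = chi := pinv_solves r_gt0 pinv fs_feas.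
have L_phi_f : laplacian a b r *m phi = (incidence a b R)^T *m f.
  by rewrite L_phi f_feas.
have error := potential_error_identity r_gt0 v L_phi_f.
have Q_le_f := potential_energy_le r_gt0 L_phi_f.
have fs_le_Q := optimal_energy_le r_gt0 fs_opt L_phi.
have pyth := energy_pythagoras r_gt0 fs_feas fs_opt f_feas.
have defects := cycle_defect_sum_le s f tree_T tp_tree no_loop r_gt0 fs_feas fs_opt.
have tau_ge0 := tree_cond_ge0 a b T tp r_gt0.
rewrite /cycle_defect -/v in defects.
set Q := (phi^T *m laplacian a b r *m phi) 0 0 in error Q_le_f fs_le_Q *.
set tau := tree_cond a b r T tp in defects tau_ge0 *.
have Q_ge0 : 0 <= Q by apply: le_trans fs_le_Q; rewrite energyE rdot_ge0.
have gap_le : energy r (f - fstar) <= eps * Q.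
  by have := ler_wpM2l (ltW eps_gt0) fs_le_Q; lra.
have err_le : ((v - phi)^T *m laplacian a b r *m (v - phi)) 0 0 <= eps * tau * Q.
  have := ler_wpM2l tau_ge0 gap_le.
  by rewrite [eps * tau]mulrC -mulrA; lra.
have eps_tau_ge0 : 0 <= eps * tau by rewrite mulr_ge0 // ltW.
by rewrite /Lnorm -sqrtrM // -/Q ler_sqrt // mulr_ge0.
Qed.
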